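(* Let $K$ be a totally real number field of degree $n$ and let $A\subseteq\mathbb{R}^n$ be an integer plane with integer distance $\mathrm{ID}(A)=k>0$. Then there exists $\delta\in\mathcal{O}_K^\vee$ such that $A$ is contained in the hyperplane $\{x\in\mathbb{R}^n:\sum_{i=1}^n\tau_i(\delta)x_i=k\}$.
   Context: $\tau_1,\dots,\tau_n$ are the real embeddings of $K$; the Minkowski embedding is $\iota_M:K\to\mathbb{R}^n$, $\alpha\mapsto(\tau_1(\alpha),\dots,\tau_n(\alpha))$, and $\Lambda=\iota_M(\mathcal{O}_K)$ is a lattice of rank $n$. The codifferent is $\mathcal{O}_K^\vee=\{\delta\in K:\operatorname{Tr}_{K/\mathbb{Q}}(\delta\alpha)\in\mathbb{Z}\ \forall\alpha\in\mathcal{O}_K\}$. An integer plane is an affine subspace $A\subseteq\mathbb{R}^n$ such that the set $A\cap\Lambda$ spans (affinely) a lattice of rank equal to $\dim A$. For an integer plane $A$ not containing the origin, its integer distance $\mathrm{ID}(A)$ is the index of the subgroup generated by $A\cap\Lambda$ in the lattice $\Lambda\cap\operatorname{Span}_{\mathbb{R}}(A)$ (and $\mathrm{ID}(A)=0$ if $A$ contains the origin). *)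

From HB Require Import structures.
From mathcomp Require Import all_boot all_order all_algebra all_field.
From mathcomp Require Import reals.
Set Implicit Arguments. Unset Strict Implicit. Unset Printing Implicit Defensive.
Import Order.TTheory GRing.Theory Num.Theory.
Local Open Scope ring_scope.

Section NumberFieldDefs.
Variables (R : realType) (K : fieldExtType rat).

Definition ring_of_integers (a : K) : Prop :=
  exists p : {poly int}, p \is monic /\ root (map_poly (fun z : int => z%:~R : K) p) a.

Variable n : nat.
Variable tau : 'I_n -> {rmorphism K -> R}.

Definition trK (a : K) : R := \sum_(i < n) tau i a.

Definition codifferent (d : K) : Prop :=
  forall a : K, ring_of_integers a -> exists z : int, trK (d * a) = z%:~R.

Definition minkowski (a : K) : 'rV[R]_n := \row_(i < n) tau i a.

Definition Lambda (x : 'rV[R]_n) : Prop :=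
  exists a : K, ring_of_integers a /\ x = minkowski a.
End NumberFieldDefs.

Section AffineDefs.
Variables (R : realType) (n : nat).
Notation pt := 'rV[R]_n.

Definition affine_subspace (A : pt -> Prop) : Prop :=
  exists (p : pt) (V : 'M[R]_n), forall x, A x <-> (x - p <= V)%MS.

Definition lin_span (S : pt -> Prop) (x : pt) : Prop :=
  exists m (c : 'I_m -> R) (s : 'I_m -> pt),
    (forall j, S (s j)) /\ x = \sum_(j < m) c j *: s j.

Definition aff_span (S : pt -> Prop) (x : pt) : Prop :=
  exists m (c : 'I_m -> R) (s : 'I_m -> pt),
    (forall j, S (s j)) /\ \sum_(j < m) c j = 1 /\ x = \sum_(j < m) c j *: s j.

Definition gen_group (S : pt -> Prop) (x : pt) : Prop :=
  exists m (c : 'I_m -> int) (s : 'I_m -> pt),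
    (forall j, S (s j)) /\ x = \sum_(j < m) s j *~ c j.

Definition has_index (H G : pt -> Prop) (k : nat) : Prop :=
  exists r : 'I_k -> pt, (forall j, H (r j)) /\
    forall h, H h -> exists! j, G (h - r j).

Variable L : pt -> Prop.

Definition meetL (A : pt -> Prop) (x : pt) : Prop := A x /\ L x.

Definition integer_plane (A : pt -> Prop) : Prop :=
  affine_subspace A /\ forall x, aff_span (meetL A) x <-> A x.

Definition integer_distance (A : pt -> Prop) (k : nat) : Prop :=
  (A 0 /\ k = 0%N) \/
  (~ A 0 /\ has_index (fun x => L x /\ lin_span A x) (gen_group (meetL A)) k).
End AffineDefs.

From HB Require Import structures.
From mathcomp Require Import all_boot all_order all_algebra all_field.
From mathcomp Require Import reals.
From mathcomp Require Import ring lra zify.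
From Stdlib Require Import Classical.
Import Order.TTheory GRing.Theory Num.Theory.
Set Implicit Arguments. Unset Strict Implicit. Unset Printing Implicit Defensive.
Local Open Scope ring_scope.

(* Let f be the linear form equal to 1 on A and Lambda' the lattice of points of Lambda in
   the linear span of A.  Since A ∩ Lambda generates a subgroup of index k of Lambda', every
   h in Lambda' has k h in that subgroup, so k f is integral on Lambda'.  By the Smith normal
   form, k f then agrees on A ∩ Lambda with a linear form c that is integral on all of
   Lambda, and c = k on A because A is the affine hull of A ∩ Lambda.  Finally, through an
   integral basis of O_K (which exists by descent on the discriminant) and the
   non-degeneracy of the rational trace form, every such dual-lattice form c is
   x |-> sum_i tau_i(d) x_i for some d in the codifferent. *)

Lemma unitmx_ker0 (F : fieldType) m (A : 'M[F]_m) :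
  (forall u : 'rV_m, u *m A = 0 -> u = 0) -> A \in unitmx.
Proof.
move=> ker0; rewrite -row_free_unit -kermx_eq0; apply/rowV0P => u /sub_kermxP.
exact: ker0.
Qed.

(** * Independence of characters *)

Section CharacterIndependence.
Variables (K : pzRingType) (R : idomainType) (m : nat).
Variable tau : 'I_m -> {rmorphism K -> R}.
Hypothesis tau_inj : forall i j : 'I_m, (forall a : K, tau i a = tau j a) -> i = j.

Lemma rmorph_independent_in (S : {set 'I_m}) (v : 'I_m -> R) :
  (forall a, \sum_(i in S) v i * tau i a = 0) -> forall i, i \in S -> v i = 0.
Proof.
have [N leN] := ubnP #|S|; elim: N S v leN => // N IH S v leN vS0 i iS.
case: (pickP [pred j in S | j != i]) => [j /andP[jS ji] | S_i]; last first.
  have := vS0 1; rewrite (big_pred1 i) ?rmorph1 ?mulr1 // => x /=.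
  by apply/idP/eqP => [xS | ->//]; move/negbT: (S_i x); rewrite /= xS negbK => /eqP.
have [b tau_ij_b] : exists b, tau i b != tau j b.
  apply: NNPP => /not_ex_all_not taueq; move/eqP: ji; apply.
  by apply: tau_inj => a; apply/esym/eqP/negPn/negP; exact: taueq.
(* Subtracting [tau j b] times the relation from the relation at [b * a] kills the [j]-term. *)
have : v i * (tau i b - tau j b) = 0.
  apply: (IH (S :\ j) (fun x => v x * (tau x b - tau j b))); last by rewrite !inE eq_sym ji.
    by rewrite -ltnS (leq_trans _ leN) // [#|S|](cardsD1 j) jS.
  move=> a; rewrite [LHS](_ : _ = \sum_(x in S) v x * (tau x b - tau j b) * tau x a).
    rewrite (eq_bigr (fun x => v x * tau x (b * a) - tau j b * (v x * tau x a))).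
      by rewrite sumrB -mulr_sumr !vS0 mulr0 subrr.
    by move=> x _; rewrite rmorphM /=; ring.
  by rewrite [in RHS](big_setD1 j) //= subrr mulr0 mul0r add0r.
by move/eqP; rewrite mulf_eq0 subr_eq0 (negbTE tau_ij_b) orbF => /eqP.
Qed.

Lemma rmorph_independent (v : 'I_m -> R) :
  (forall a, \sum_i v i * tau i a = 0) -> forall i, v i = 0.
Proof.
move=> v0 i; apply: (@rmorph_independent_in setT) => // a.
by rewrite (eq_bigl predT) // => x; rewrite inE.
Qed.
End CharacterIndependence.

(** * The rational trace form *)

Section RationalTrace.
Variable K : fieldExtType rat.
Local Notation n := (\dim {:K}).
Local Notation e := (vbasis {:K}).

Definition regular_mx (a : K) : 'M[rat]_n := \matrix_(j, l) coord e l (e`_j * a).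
Definition trQ (a : K) : rat := \tr (regular_mx a).

Fact trQ_is_scalar : scalar trQ.
Proof.
move=> c a b; rewrite /trQ -mxtraceZ -mxtraceD; congr (\tr _).
by apply/matrixP => j l; rewrite !mxE mulrDr -scalerAr linearP.
Qed.
HB.instance Definition _ :=
  GRing.isSemilinear.Build rat K rat _ trQ (GRing.semilinear_linear trQ_is_scalar).

Lemma trQ1 : trQ 1 = n%:R.
Proof.
rewrite /trQ (_ : regular_mx 1 = 1%:M) ?mxtrace1 //.
by apply/matrixP => j l; rewrite !mxE mulr1 coord_free ?(basis_free (vbasisP _)).
Qed.

Lemma trQ_nondegenerate (d : K) : (forall x, trQ (d * x) = 0) -> d = 0.
Proof.
move=> trd0; apply: contra_eq (trd0 d^-1) => d_neq0.
by rewrite mulfV // trQ1 pnatr_eq0 -lt0n adim_gt0.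
Qed.

Lemma trQ_sum (I : finType) (F : I -> K) : trQ (\sum_i F i) = \sum_i trQ (F i).
Proof. exact: linear_sum. Qed.

Lemma trQZ (c : rat) (a : K) : trQ (c *: a) = c * trQ a.
Proof. exact: linearZ. Qed.
End RationalTrace.

Lemma integral_denominator (K : fieldExtType rat) (x : K) :
  exists2 d : int, d != 0 & integralOver (intr : int -> K) (d%:~R * x).
Proof.
have [q q_monic qx0] : exists2 q : {poly rat}, q \is monic & root (map_poly (in_alg K) q) x.
  have [q Dq] := polyOver1P (minPolyOver 1%VS x).
  by exists q; rewrite -?(map_monic (in_alg K)) -Dq ?monic_minPoly ?root_minPoly.
have size_q : size q = (size q).-1.+1 by rewrite prednK // size_poly_gt0 monic_neq0.
set s := (size q).-1 in size_q.
have q_s : q`_s = 1 by move/monicP: q_monic; rewrite lead_coefE.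
pose d : int := \prod_(i < size q) denq q`_i.
have d_neq0 : d != 0 by apply/prodf_neq0 => i _; exact: denq_neq0.
(* [c] is the coefficient list of the monic polynomial [d ^ s * q (X / d)]. *)
pose c i : rat := q`_i * d%:~R ^+ (s - i).
have c_int i : (i < size q)%N -> c i \is a Num.int.
  move=> lt_i_q; have [lt_i_s | ge_i_s] := ltnP i s; last first.
    have -> : i = s by lia.
    by rewrite /c q_s subnn mulr1 int_num1.
  rewrite /c (_ : (s - i)%N = (s - i.+1).+1) 1?exprS ?mulrA; last by lia.
  rewrite rpredM ?rpredX ?intr_int // /d (bigD1 (Ordinal lt_i_q)) //= rmorphM mulrA.
  by rewrite -numqE rpredM ?intr_int.
exists d => //; apply: (@integral_root_monic _ _ _ _ (\poly_(i < size q) (c i)%:A)).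
- by rewrite monicE lead_coefE size_poly_eq ?coef_poly size_q ?leqnn /c q_s subnn
    expr0 mulr1 scale1r ?eqxx ?oner_neq0.
- have {}qx0 : \sum_(i < size q) (q`_i)%:A * x ^+ i = 0.
    by move/rootP: qx0; rewrite horner_coef size_map_poly; under eq_bigr do rewrite coef_map.
  apply/rootP; rewrite horner_poly -[RHS](mulr0 ((d%:~R : K) ^+ s)) -[in RHS]qx0.
  rewrite mulr_sumr; apply: eq_bigr => i _.
  have dXs : (d%:~R : K) ^+ s = d%:~R ^+ (s - i) * d%:~R ^+ i.
    by rewrite -exprD subnK // -ltnS -size_q.
  by rewrite /c /= -!in_algE rmorphM rmorphXn rmorph_int dXs exprMn; ring.
- move=> _ /(nthP 0)[i _ <-]; rewrite coef_poly.
  case: ifP => [/c_int/floorK <- | _]; last exact: integral0.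
  by rewrite scaler_int; apply: integral_id.
Qed.

Lemma integral_ratr_int (R : numFieldType) (q : rat) :
  integralOver (intr : int -> R) (ratr q) -> q \is a Num.int.
Proof.
have map_intr_ratr (F : numFieldType) (p : {poly int}) :
    map_poly (intr : int -> F) p = map_poly ratr (map_poly (intr : int -> rat) p).
  by rewrite -map_poly_comp; apply: eq_map_poly => z /=; rewrite rmorph_int.
case=> p p_monic; rewrite /root map_intr_ratr horner_map fmorph_eq0 => pq0.
rewrite -Cint_rat; apply: Cint_rat_Aint; first exact: Crat_rat.
apply: (@root_monic_Aint (map_poly intr p)).
- by rewrite /root map_intr_ratr horner_map (eqP pq0) rmorph0.
- exact: monic_map.
- by apply/polyOverP => i; rewrite coef_map /= rpred_int.
Qed.

Section Embeddings.
Variables (R : numFieldType) (K : fieldExtType rat).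
Local Notation n := (\dim {:K}).
Local Notation e := (vbasis {:K}).
Variable tau : 'I_n -> {rmorphism K -> R}.
Hypothesis tau_inj : forall i j : 'I_n, (forall a : K, tau i a = tau j a) -> i = j.

Lemma rmorph_vbasis i (a : K) : tau i a = \sum_j ratr (coord e j a) * tau i e`_j.
Proof.
rewrite {1}(coord_vbasis (memvf a)) rmorph_sum.
by apply: eq_bigr => j _; rewrite rmorphZ_num.
Qed.

Definition embedding_mx : 'M[R]_n := \matrix_(i, j) tau i e`_j.

Lemma embedding_mx_unit : embedding_mx \in unitmx.
Proof.
apply: unitmx_ker0 => u uN0; apply/rowP => i; rewrite mxE.
move: i; apply: (rmorph_independent tau_inj) => a.
under eq_bigr do rewrite rmorph_vbasis mulr_sumr.
rewrite exchange_big big1 // => j _ /=.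
rewrite (eq_bigr (fun i => ratr (coord e j a) * (u 0 i * embedding_mx i j))).
  by move/rowP/(_ j): uN0; rewrite -mulr_sumr !mxE => ->; rewrite mulr0.
by move=> i' _; rewrite mxE; ring.
Qed.

Lemma regular_mx_embedding (a : K) :
  map_mx ratr (regular_mx a) *m embedding_mx^T = embedding_mx^T *m diag_mx (\row_i tau i a).
Proof.
apply/matrixP => j i; rewrite mul_mx_diag !mxE -rmorphM (rmorph_vbasis i).
by apply: eq_bigr => l _; rewrite !mxE.
Qed.

Lemma ratr_trQ (a : K) : ratr (trQ a) = \sum_i tau i a.
Proof.
have NTu : embedding_mx^T \in unitmx by rewrite unitmx_tr embedding_mx_unit.
have -> : \sum_i tau i a = \tr (diag_mx (\row_i tau i a)).
  by rewrite mxtrace_diag; apply: eq_bigr => i _; rewrite mxE.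
rewrite -[diag_mx _](mulKmx NTu) -regular_mx_embedding mxtrace_mulC mulmxK //.
by rewrite /trQ trace_map_mx.
Qed.

Lemma trQ_integral (a : K) : integralOver (intr : int -> K) a -> trQ a \is a Num.int.
Proof.
move=> a_int; apply: (@integral_ratr_int R); rewrite ratr_trQ.
apply: big_ind => [|x y|i _]; [exact: integral0 | exact: integral_add |].
case: (integral_rmorph (tau i) a_int) => p p_monic p_root; exists p => //.
by move: p_root; congr root; apply: eq_map_poly => z /=; rewrite rmorph_int.
Qed.

(** * Integral bases *)

Local Notation integral := (integralOver (intr : int -> K)).

Definition mxbasis (P : 'M[rat]_n) j : K := \sum_l P j l *: e`_l.
Definition mxcoord (P : 'M[rat]_n) (a : K) : 'rV[rat]_n := (\row_l coord e l a) *m invmx P.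
Definition trQ_gram (P : 'M[rat]_n) : 'M[rat]_n :=
  \matrix_(i, j) trQ (mxbasis P i * mxbasis P j).
Definition integral_Qbasis (P : 'M[rat]_n) := P \in unitmx /\ forall j, integral (mxbasis P j).

Lemma mxbasis_mul (T P : 'M[rat]_n) i : mxbasis (T *m P) i = \sum_m T i m *: mxbasis P m.
Proof.
rewrite /mxbasis; under [RHS]eq_bigr do rewrite scaler_sumr.
rewrite [RHS]exchange_big /=; apply: eq_bigr => l _.
by rewrite mxE scaler_suml; apply: eq_bigr => m _; rewrite scalerA.
Qed.

Lemma mxbasis1 j : mxbasis 1%:M j = e`_j.
Proof.
rewrite /mxbasis (bigD1 j) //= big1 ?addr0 => [|l /negbTE lj]; first by rewrite mxE eqxx scale1r.
by rewrite mxE eq_sym lj scale0r.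
Qed.

Lemma mxcoordK (P : 'M[rat]_n) a : P \in unitmx -> \sum_j mxcoord P a 0 j *: mxbasis P j = a.
Proof.
move=> P_unit; rewrite [RHS](coord_vbasis (memvf a)) /mxbasis.
under eq_bigr do rewrite scaler_sumr.
rewrite exchange_big /=; apply: eq_bigr => l _.
under eq_bigr do rewrite scalerA.
rewrite -scaler_suml; congr (_ *: _).
have : (mxcoord P a *m P) 0 l = coord e l a by rewrite /mxcoord mulmxKV // mxE.
by rewrite mxE => <-; apply: eq_bigr => j _; rewrite mulrC.
Qed.

Lemma trQ_gram_mul (T P : 'M[rat]_n) : trQ_gram (T *m P) = T *m trQ_gram P *m T^T.
Proof.
apply/matrixP => i j; rewrite !mxE !mxbasis_mul mulr_suml trQ_sum.
under [RHS]eq_bigr do rewrite !mxE mulr_suml.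
rewrite [RHS]exchange_big /=; apply: eq_bigr => l _.
rewrite mulr_sumr trQ_sum; apply: eq_bigr => m _.
by rewrite !mxE -scalerAl -scalerAr !trQZ; ring.
Qed.

Lemma trQ_gram_unit (P : 'M[rat]_n) : P \in unitmx -> trQ_gram P \in unitmx.
Proof.
move=> P_unit; rewrite -[P]mulmx1 trQ_gram_mul !unitmx_mul unitmx_tr P_unit andbT /=.
apply: unitmx_ker0 => u uG0; pose d := \sum_l u 0 l *: e`_l.
have d0 : d = 0.
  apply: trQ_nondegenerate => x; rewrite (coord_vbasis (memvf x)) mulr_sumr trQ_sum.
  apply: big1 => m _; rewrite -scalerAr trQZ.
  have -> : trQ (d * e`_m) = (u *m trQ_gram 1%:M) 0 m.
    rewrite mulr_suml trQ_sum !mxE; apply: eq_bigr => l _.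
    by rewrite -scalerAl trQZ !mxE !mxbasis1.
  by rewrite uG0 mxE mulr0.
apply/rowP => l; rewrite mxE -(coord_sum_free (fun l => u 0 l) l (basis_free (vbasisP _))).
by rewrite -/d d0 linear0.
Qed.

Lemma det_trQ_gram_int (P : 'M[rat]_n) : integral_Qbasis P -> \det (trQ_gram P) \is a Num.int.
Proof.
case=> _ P_int.
have -> : trQ_gram P = map_mx intr (\matrix_(i, j) Num.floor (trQ_gram P i j)).
  by apply/matrixP => i j; rewrite !mxE floorK //; apply/trQ_integral/integral_mul.
by rewrite det_map_mx intr_int.
Qed.

Lemma integral_Qbasis_exists : exists P, integral_Qbasis P.
Proof.
have [d d_neq0 d_int] := fin_all_exists2 (fun j : 'I_n => integral_denominator e`_j).
exists (diag_mx (\row_j (d j)%:~R)); split.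
  by rewrite unitmxE det_diag unitfE; apply/prodf_neq0 => j _; rewrite mxE intr_eq0.
move=> j; rewrite /mxbasis (bigD1 j) //= big1 ?addr0 => [|l /negbTE lj].
  by rewrite !mxE eqxx mulr1n scaler_int -mulrzl.
by rewrite !mxE eq_sym lj mulr0n scale0r.
Qed.

Lemma integral_Qbasis_refine (P : 'M[rat]_n) a j1 :
  integral_Qbasis P -> integral a -> mxcoord P a 0 j1 \isn't a Num.int ->
  exists2 P', integral_Qbasis P' & `|\det (trQ_gram P')| < `|\det (trQ_gram P)|.
Proof.
move=> [P_unit P_int] a_int c_j1; set c := mxcoord P a.
have [j0 c_j0 j0_max] := @arg_maxnP _ j1 (fun j => c 0 j \isn't a Num.int) val c_j1.
pose fr j := c 0 j - (Num.floor (c 0 j))%:~R.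
have fr_int j : c 0 j \is a Num.int -> fr j = 0 by move=> cj; rewrite /fr floorK ?subrr.
have fr_j0 : 0 < fr j0 < 1.
  rewrite subr_gt0 lt_neqAle floor_le andbT -intrEfloor c_j0 /=.
  by have := floorD1_gt (c 0 j0); rewrite intrD /fr; lra.
(* Replacing the [j0]-th basis vector by [a - \sum_m floor (c m) w_m = \sum_m fr m w_m] is a
   triangular change of basis ([j0] is the last non-integral coordinate) of determinant
   [fr j0], which lies in (0, 1). *)
pose T : 'M[rat]_n := \matrix_(i, j) if i == j0 then fr j else (i == j)%:R.
have detT : \det T = fr j0.
  rewrite det_trig; last first.
    apply/is_trig_mxP => i j lt_ij; rewrite mxE; case: eqP => [i_j0 | _].
      by apply: fr_int; apply: contraTT lt_ij => /j0_max; rewrite -i_j0 -leqNgt.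
    by case: (i =P j) lt_ij => // ->; rewrite ltnn.
  rewrite (bigD1 j0) //= mxE eqxx big1 ?mulr1 // => i /negbTE i_j0.
  by rewrite mxE i_j0 eqxx.
exists (T *m P).
  split=> [|i].
    by rewrite unitmx_mul P_unit andbT unitmxE detT unitfE; case/andP: fr_j0 => /gt_eqF ->.
  rewrite mxbasis_mul; case: (eqVneq i j0) => [-> | i_j0].
    under eq_bigr do rewrite mxE eqxx scalerBl.
    rewrite sumrB mxcoordK //; apply: integral_sub => //.
    apply: big_ind => [|x y|m _]; [exact: integral0 | exact: integral_add |].
    by rewrite scaler_int -mulrzl; apply: integral_mul => //; apply: integral_id.
  rewrite (bigD1 i) //= big1 ?addr0 => [|m /negbTE mi].
    by rewrite mxE (negbTE i_j0) eqxx scale1r.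
  by rewrite mxE (negbTE i_j0) eq_sym mi scale0r.
have D_gt0 : 0 < `|\det (trQ_gram P)| by rewrite normr_gt0 -unitfE -unitmxE trQ_gram_unit.
case/andP: fr_j0 => fr_gt0 fr_lt1.
rewrite trQ_gram_mul !det_mulmx det_tr detT !normrM ger0_norm ?ltW // mulrAC gtr_pMl //.
nra.
Qed.

Lemma integral_basis_exists :
  exists2 P, integral_Qbasis P & forall a, integral a -> forall j, mxcoord P a 0 j \is a Num.int.
Proof.
have [P0 P0_int] := integral_Qbasis_exists.
pose abs_disc P := `|Num.floor (\det (trQ_gram P))|%N.
suff : forall N P, integral_Qbasis P -> (abs_disc P < N)%N ->
    exists2 P, integral_Qbasis P & forall a, integral a -> forall j, mxcoord P a 0 j \is a Num.int.
  by move/(_ (abs_disc P0).+1 P0 P0_int (ltnSn _)).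
elim=> [|N IH] P P_int lt_P_N //.
case: (classic (forall a, integral a -> forall j, mxcoord P a 0 j \is a Num.int)) => [P_coord|].
  by exists P.
move=> /not_all_ex_not[a a_bad].
have [a_int /not_all_ex_not[j /negP c_j]] := imply_to_and _ _ a_bad.
have [P' P'_int lt_P'_P] := integral_Qbasis_refine P_int a_int c_j.
apply: (IH P' P'_int); rewrite -ltnS (leq_trans _ lt_P_N) // ltnS /abs_disc.
suff : `|Num.floor (\det (trQ_gram P'))| < `|Num.floor (\det (trQ_gram P))| :> int by lia.
by rewrite -(ltr_int rat) !intr_norm !floorK ?det_trQ_gram_int.
Qed.

Lemma trQ_dual (P : 'M[rat]_n) (u : 'rV[rat]_n) :
  P \in unitmx -> exists d : K, forall j, trQ (d * mxbasis P j) = u 0 j.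
Proof.
move=> P_unit; pose v := u *m invmx (trQ_gram P).
exists (\sum_i v 0 i *: mxbasis P i) => j; rewrite mulr_suml trQ_sum.
rewrite -[u in RHS](mulmxKV (trQ_gram_unit P_unit)) -/v mxE.
by apply: eq_bigr => i _; rewrite -scalerAl trQZ [trQ_gram P i j]mxE.
Qed.
End Embeddings.

(** * Integer hyperplanes of lattices *)

Lemma int_Smith_solution (F : fieldType) m n (M : 'M[int]_(m, n)) (w : 'cV[F]_n) :
  (forall (z : 'rV[int]_n) (N : int) (y : 'rV[int]_m), N != 0 -> N *: z = y *m M ->
      exists t : int, (map_mx intr z *m w) 0 0 = t%:~R) ->
  exists u : 'cV[int]_n, map_mx intr M *m map_mx intr u = map_mx intr M *m w.
Proof.
move=> w_int; have [L L_unit [U U_unit [d _ DM]]] := int_Smith_normal_form M.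
set D := \matrix_(i, j) _ in DM.
pose nz_diag (k : 'I_n) := (k < m)%N && (d`_k != 0).
(* For a nonzero invariant factor, [d_k] times row [k] of [U] lies in the row space of [M]. *)
have t_ex k : exists t : int, nz_diag k -> (map_mx intr (row k U) *m w) 0 0 = t%:~R.
  have [/andP[k_m dk] | _] := boolP (nz_diag k); last by exists 0.
  have rowU : d`_k *: row k U = row (Ordinal k_m) (invmx L) *m M.
    rewrite DM -row_mul !mulmxA mulVmx // mul1mx row_mul.
    apply/rowP => j; rewrite !mxE (bigD1 k) //= big1 ?addr0 => [|l lk].
      by rewrite !mxE eqxx.
    by rewrite !mxE /= -[(k : nat) == l]/(k == l) eq_sym (negbTE lk) mulr0n mul0r.
  by have [t wt] := w_int _ _ _ dk rowU; exists t.
have [t wt] := fin_all_exists t_ex.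
exists (invmx U *m \col_k (if nz_diag k then t k else 0)).
rewrite DM !map_mxM -!mulmxA; congr (_ *m _).
rewrite [X in _ *m X = _]mulmxA -map_mxM mulmxV // map_mx1 mul1mx.
apply/colP => i; rewrite !mxE; apply: eq_bigr => k _; rewrite !mxE.
have [ik | ik] := eqVneq (i : nat) k; last by rewrite mulr0n !mul0r.
have [->| di] := eqVneq d`_i 0; first by rewrite mulr1n !mul0r.
have nz_k : nz_diag k by rewrite /nz_diag -ik ltn_ord di.
rewrite nz_k; congr (_ * _); rewrite -[LHS]/((t k)%:~R) -(wt k nz_k) !mxE.
by apply: eq_bigr => j _; rewrite !mxE.
Qed.

Section AffineGeometry.
Variables (R : realType) (n : nat).
Local Notation pt := 'rV[R]_n.

Lemma affine_functional (A : pt -> Prop) :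
  affine_subspace A -> ~ A 0 -> exists c : 'cV[R]_n, forall x, A x -> (x *m c) 0 0 = 1.
Proof.
move=> [p [V AV]] nA0; set C := cokermx V.
have [j pCj] : exists j, (p *m C) 0 j != 0.
  apply/existsP; apply: contra_notT nA0 => /existsPn pC0; apply/AV.
  rewrite sub0r eqmx_opp submxE; apply/eqP/rowP => j.
  by rewrite [RHS]mxE; apply/eqP/negbNE; exact: pC0.
exists (((p *m C) 0 j)^-1 *: col j C) => x /AV.
rewrite submxE mulmxBl subr_eq0 => /eqP xC; rewrite -scalemxAr mxE.
have -> : (x *m col j C) 0 0 = (x *m C) 0 j by rewrite !mxE; under eq_bigr do rewrite mxE.
by rewrite xC mulVf.
Qed.

Lemma affine_hull_finite (A : pt -> Prop) :
  affine_subspace A -> exists q : 'I_n.+1 -> pt, (forall i, A (q i)) /\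
    forall x, A x -> exists l : 'I_n.+1 -> R, \sum_i l i = 1 /\ x = \sum_i l i *: q i.
Proof.
move=> [p [V AV]].
exists (fun i => if unlift ord0 i is Some i' then p + row i' V else p); split.
  move=> i; apply/AV; case: unlift => [i'|]; last by rewrite subrr sub0mx.
  by rewrite addrC addKr row_sub.
move=> x /AV/submxP[D xpD].
exists (fun i => if unlift ord0 i is Some i' then D 0 i' else 1 - \sum_i D 0 i); split.
  rewrite big_ord_recl unlift_none; set sD := (X in 1 - X).
  by under eq_bigr do rewrite liftK; rewrite subrK.
rewrite big_ord_recl unlift_none; set sD := (X in 1 - X).
under eq_bigr do rewrite liftK scalerDr.
rewrite big_split /= -scaler_suml -mulmx_sum_row -xpD scalerBl scale1r.
by rewrite addrA subrK addrC subrK.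
Qed.

Lemma aff_span_finite (S A : pt -> Prop) :
  affine_subspace A -> (forall x, A x -> aff_span S x) ->
  exists (T : finType) (s : T -> pt), (forall t, S (s t)) /\
    forall x, A x -> exists c : T -> R, \sum_t c t = 1 /\ x = \sum_t c t *: s t.
Proof.
move=> affA A_span; have [q [Aq q_hull]] := affine_hull_finite affA.
have q_span (i : 'I_n.+1) : exists X : {m : nat & ('I_m -> R) * ('I_m -> pt)}%type,
    [/\ forall j, S ((tagged X).2 j), \sum_j (tagged X).1 j = 1
       & q i = \sum_j (tagged X).1 j *: (tagged X).2 j].
  by have [m [c [s [Ss [c1 ->]]]]] := A_span _ (Aq i); exists (existT _ m (c, s)).
have [X qX] := fin_all_exists q_span.
pose T := {i : 'I_n.+1 & 'I_(tag (X i))}.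
have sumT (V : zmodType) (F : forall i, 'I_(tag (X i)) -> V) :
    \sum_(t : T) F (tag t) (tagged t) = \sum_i \sum_j F i j.
  by rewrite sig_big_dep.
exists T, (fun t => (tagged (X (tag t))).2 (tagged t)); split.
  by move=> [i j]; have [Ss _ _] := qX i.
move=> x /q_hull[l [l1 ->]].
exists (fun t => l (tag t) * (tagged (X (tag t))).1 (tagged t)); split.
  have /= -> := sumT _ (fun i j => l i * (tagged (X i)).1 j).
  rewrite -l1; apply: eq_bigr => i _.
  by have [_ c1 _] := qX i; rewrite -mulr_sumr c1 mulr1.
have /= -> := sumT _ (fun i j => (l i * (tagged (X i)).1 j) *: (tagged (X i)).2 j).
apply: eq_bigr => i _; have [_ _ ->] := qX i.
by rewrite scaler_sumr; apply: eq_bigr => j _; rewrite scalerA.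
Qed.

Definition ord_cat m1 m2 (T : Type) (f : 'I_m1 -> T) (g : 'I_m2 -> T) (i : 'I_(m1 + m2)) : T :=
  match split i with inl a => f a | inr b => g b end.

Lemma sum_ord_cat (V : zmodType) m1 m2 (f : 'I_m1 -> V) (g : 'I_m2 -> V) :
  \sum_i ord_cat f g i = \sum_i f i + \sum_i g i.
Proof.
rewrite big_split_ord /=; congr (_ + _); apply: eq_bigr => i _.
  by rewrite /ord_cat (unsplitK (inl _ : 'I_m1 + 'I_m2)).
by rewrite /ord_cat (unsplitK (inr _ : 'I_m1 + 'I_m2)).
Qed.

Lemma lin_spanD (S : pt -> Prop) x y : lin_span S x -> lin_span S y -> lin_span S (x + y).
Proof.
move=> [m1 [c1 [s1 [S1 ->]]]] [m2 [c2 [s2 [S2 ->]]]].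
exists (m1 + m2)%N, (ord_cat c1 c2), (ord_cat s1 s2); split.
  by move=> i; rewrite /ord_cat; case: split.
by rewrite -sum_ord_cat; apply: eq_bigr => i _; rewrite /ord_cat; case: split.
Qed.

Lemma gen_groupB (S : pt -> Prop) x y : gen_group S x -> gen_group S y -> gen_group S (x - y).
Proof.
move=> [m1 [c1 [s1 [S1 ->]]]] [m2 [c2 [s2 [S2 ->]]]].
exists (m1 + m2)%N, (ord_cat c1 (fun j => - c2 j)), (ord_cat s1 s2); split.
  by move=> i; rewrite /ord_cat; case: split.
rewrite -sumrN -sum_ord_cat; apply: eq_bigr => i _; rewrite /ord_cat.
by case: split => j //; rewrite mulrNz.
Qed.

Lemma gen_group_mulmx_int (S : pt -> Prop) (c : 'cV[R]_n) x :
  (forall y, S y -> (y *m c) 0 0 \is a Num.int) -> gen_group S x -> (x *m c) 0 0 \is a Num.int.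
Proof.
move=> Sc [m [z [s [Ss ->]]]]; rewrite mulmx_suml summxE rpred_sum // => j _.
by rewrite -scaler_int -scalemxAl mxE rpredM ?intr_int ?Sc.
Qed.

(* The cosets of [h + r j] permute the representatives [r]; summing telescopes to [h *+ k]. *)
Lemma has_index_mulrn (H G : pt -> Prop) k :
  has_index H G k -> (forall x y, H x -> H y -> H (x + y)) ->
  (forall x y, G x -> G y -> G (x - y)) ->
  forall h, H h -> exists2 g : 'I_k -> pt, (forall j, G (g j)) & h *+ k = \sum_j g j.
Proof.
move=> [r [Hr r_coset]] HD GB h Hh.
have sigma_ex j : exists j', G (h + r j - r j').
  by have [j' [Gj' _]] := r_coset _ (HD _ _ Hh (Hr j)); exists j'.
have [sigma Gsigma] := fin_all_exists sigma_ex.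
have sigma_inj : injective sigma.
  have G_r i1 i2 : sigma i1 = sigma i2 -> G (r i1 - r i2).
    move=> sigma_i; have := GB _ _ (Gsigma i1) (Gsigma i2); rewrite sigma_i; congr G.
    by rewrite opprB addrA subrK opprD addrACA subrr add0r.
  move=> j1 j2 sigma_j; have [j0 [_ j0_uniq]] := r_coset _ (Hr j1).
  by rewrite -(j0_uniq j1 (G_r j1 j1 erefl)) -(j0_uniq j2 (G_r _ _ sigma_j)).
exists (fun j => h + r j - r (sigma j)) => //.
rewrite sumrB big_split /= sumr_const card_ord.
by rewrite -(@reindex_inj _ _ _ _ sigma xpredT r sigma_inj) addrK.
Qed.
End AffineGeometry.

Section LatticeHyperplane.
Variables (R : realType) (n : nat).
Local Notation pt := 'rV[R]_n.

Definition lattice_basis (L : pt -> Prop) (B : 'M[R]_n) :=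
  B \in unitmx /\ forall x, L x <-> exists z : 'rV[int]_n, x = map_mx intr z *m B.

Variables (L : pt -> Prop) (B : 'M[R]_n).
Hypothesis LB : lattice_basis L B.

Lemma lattice_add x y : L x -> L y -> L (x + y).
Proof.
case: LB => _ LBx /LBx[z ->] /LBx[z' ->]; apply/LBx; exists (z + z').
by rewrite raddfD mulmxDl.
Qed.

Lemma has_index_functional_int (A : pt -> Prop) (f : 'cV[R]_n) k :
  has_index (fun x => L x /\ lin_span A x) (gen_group (meetL L A)) k ->
  (forall x, A x -> (x *m f) 0 0 = 1) ->
  forall h, L h -> lin_span A h -> k%:R * (h *m f) 0 0 \is a Num.int.
Proof.
move=> idx fA h Lh Ah.
have H_add x y : L x /\ lin_span A x -> L y /\ lin_span A y ->
    L (x + y) /\ lin_span A (x + y).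
  by move=> [Lx Ax] [Ly Ay]; split; [exact: lattice_add | exact: lin_spanD].
have [g Gg hk] := has_index_mulrn idx H_add (@gen_groupB _ _ _) (conj Lh Ah).
have -> : k%:R * (h *m f) 0 0 = ((h *+ k) *m f) 0 0.
  by rewrite -[in RHS]scaler_nat -scalemxAl [RHS]mxE.
rewrite hk mulmx_suml summxE rpred_sum // => j _.
by apply: gen_group_mulmx_int (Gg j) => y [Ay _]; rewrite fA.
Qed.

Lemma integer_plane_dual (A : pt -> Prop) k :
  integer_plane L A -> ~ A 0 ->
  has_index (fun x => L x /\ lin_span A x) (gen_group (meetL L A)) k ->
  exists2 c : 'cV[R]_n, (forall x, L x -> (x *m c) 0 0 \is a Num.int)
                      & (forall x, A x -> (x *m c) 0 0 = k%:R).
Proof.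
case: LB => B_unit LBx [affA spanA] nA0 idx.
have [f fA] := affine_functional affA nA0.
have [T [s [sAL s_hull]]] := aff_span_finite affA (fun x Ax => proj2 (spanA x) Ax).
have kf_int := has_index_functional_int idx fA.
have [z sz] := fin_all_exists (fun t => iffLR (LBx (s t)) (proj2 (sAL t))).
pose M : 'M[int]_(#|T|, n) := \matrix_r z (enum_val r).
(* [k f] is integral on every lattice point whose coordinates lie in the rational row space
   of [M], that is, in the linear span of the points [s t]. *)
have [|u Mu] := @int_Smith_solution R _ _ M (k%:R *: (B *m f)).
  move=> x N y N_neq0 NxM; set h := map_mx intr x *m B.
  have Nh : N%:~R *: h = \sum_r (y 0 r)%:~R *: s (enum_val r).
    rewrite scalemxAl (_ : N%:~R *: map_mx intr x = map_mx intr (y *m M)); last first.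
      by rewrite -NxM; apply/rowP => j; rewrite !mxE rmorphM.
    rewrite map_mxM -mulmxA mulmx_sum_row.
    by apply: eq_bigr => r _; rewrite !mxE row_mul -map_row rowK sz.
  apply/intrP; rewrite -scalemxAr mxE mulmxA -/h.
  apply: kf_int; first by apply/LBx; exists x.
  exists #|T|, (fun r => (y 0 r)%:~R / N%:~R), (fun r => s (enum_val r)); split.
    by move=> r; case: (sAL (enum_val r)).
  have N_neq0' : (N%:~R : R) != 0 by rewrite intr_eq0.
  rewrite -[h](scalerK N_neq0') Nh scaler_sumr; apply: eq_bigr => r _.
  by rewrite scalerA mulrC.
exists (invmx B *m map_mx intr u) => x.
  case/LBx=> y ->; rewrite -mulmxA (mulmxA B) mulmxV // mul1mx -map_mxM mxE.
  by rewrite rpred_int.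
have sk t : (s t *m (invmx B *m map_mx intr u)) 0 0 = k%:R.
  have := congr1 (row (enum_rank t)) Mu; rewrite !row_mul -map_row rowK enum_rankK => Mu_t.
  rewrite sz -mulmxA (mulmxA B) mulmxV // mul1mx Mu_t -scalemxAr mxE mulmxA -sz.
  by rewrite fA ?mulr1 //; case: (sAL t).
move=> /s_hull[a [a1 ->]]; rewrite mulmx_suml summxE (eq_bigr (fun t => a t * k%:R)).
  by rewrite -mulr_suml a1 mul1r.
by move=> t _; rewrite -scalemxAl mxE sk.
Qed.
End LatticeHyperplane.

(** * The dual of the Minkowski lattice *)

Section Codifferent.
Variables (R : realType) (K : fieldExtType rat).
Local Notation n := (\dim {:K}).
Variable tau : 'I_n -> {rmorphism K -> R}.
Hypothesis tau_inj : forall i j : 'I_n, (forall a : K, tau i a = tau j a) -> i = j.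
Local Notation integral := (integralOver (intr : int -> K)).

Lemma ring_of_integersE (a : K) : ring_of_integers a <-> integral a.
Proof. by split=> [[p [p_monic pa0]] | [p p_monic pa0]]; exists p. Qed.

Lemma minkowski_comb (I : finType) (c : I -> rat) (w : I -> K) :
  minkowski tau (\sum_i c i *: w i) = \sum_i ratr (c i) *: minkowski tau (w i).
Proof.
apply/rowP => j; rewrite !mxE rmorph_sum summxE.
by apply: eq_bigr => i _; rewrite !mxE rmorphZ_num.
Qed.

Definition minkowski_mx (P : 'M[rat]_n) : 'M[R]_n := \matrix_j minkowski tau (mxbasis P j).

Lemma minkowski_mx_unit (P : 'M[rat]_n) : P \in unitmx -> minkowski_mx P \in unitmx.
Proof.
move=> P_unit.
have -> : minkowski_mx P = map_mx ratr P *m (embedding_mx tau)^T.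
  apply/matrixP => j i; rewrite !mxE /mxbasis rmorph_sum.
  by apply: eq_bigr => l _; rewrite !mxE rmorphZ_num.
by rewrite unitmx_mul map_unitmx P_unit unitmx_tr embedding_mx_unit.
Qed.

Lemma Lambda_lattice_basis : exists B, lattice_basis (Lambda tau) B.
Proof.
have [P [P_unit P_int] P_coord] := integral_basis_exists tau_inj.
exists (minkowski_mx P); split=> [|x]; first exact: minkowski_mx_unit.
have mink_int (z : 'rV[int]_n) :
    map_mx intr z *m minkowski_mx P = minkowski tau (\sum_j (z 0 j)%:~R *: mxbasis P j).
  rewrite minkowski_comb mulmx_sum_row; apply: eq_bigr => j _.
  by rewrite rowK !mxE ratr_int.
split=> [[a [/ring_of_integersE a_int ->]] | [z ->]].
  exists (\row_j Num.floor (mxcoord P a 0 j)); rewrite mink_int; congr (minkowski _ _).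
  rewrite -[LHS](mxcoordK a P_unit); apply: eq_bigr => j _.
  by rewrite [in RHS]mxE floorK ?P_coord.
exists (\sum_j (z 0 j)%:~R *: mxbasis P j); split; last exact: mink_int.
apply/ring_of_integersE; apply: big_ind => [|u v|j _]; [exact: integral0 | exact: integral_add |].
by rewrite scaler_int -mulrzl; apply: integral_mul (P_int j); apply: integral_id.
Qed.

Lemma dual_lattice_codifferent (c : 'cV[R]_n) :
  (forall x, Lambda tau x -> (x *m c) 0 0 \is a Num.int) ->
  exists2 d : K, codifferent tau d & (minkowski tau d)^T = c.
Proof.
move=> c_int; have [P [P_unit P_int] _] := integral_basis_exists tau_inj.
have w_Lambda j : Lambda tau (minkowski tau (mxbasis P j)).
  by exists (mxbasis P j); split=> //; apply/ring_of_integersE/P_int.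
pose u := \row_j ((Num.floor ((minkowski tau (mxbasis P j) *m c) 0 0))%:~R : rat).
have [d trd] := trQ_dual u P_unit.
have tr_d j : \sum_i tau i d * tau i (mxbasis P j) = (minkowski tau (mxbasis P j) *m c) 0 0.
  rewrite -[RHS]floorK ?(c_int _ (w_Lambda j)) // -ratr_int.
  rewrite (_ : (Num.floor _)%:~R = u 0 j); last by rewrite !mxE.
  rewrite -trd (ratr_trQ tau_inj).
  by apply: eq_bigr => i _; rewrite rmorphM.
have mink_d : (minkowski tau d)^T = c.
  have B_unit := minkowski_mx_unit P_unit.
  rewrite -[LHS](mulKmx B_unit) -[RHS](mulKmx B_unit); congr (_ *m _).
  apply/colP => j; transitivity (\sum_i tau i d * tau i (mxbasis P j)).
    by rewrite mxE; apply: eq_bigr => i _; rewrite !mxE mulrC.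
  by rewrite tr_d !mxE; apply: eq_bigr => i _; rewrite !mxE.
exists d => // a a_int; apply/intrP.
have -> : trK tau (d * a) = (minkowski tau a *m (minkowski tau d)^T) 0 0.
  by rewrite mxE; apply: eq_bigr => i _; rewrite !mxE rmorphM mulrC.
by rewrite mink_d; apply: c_int; exists a.
Qed.
End Codifferent.

Unset Implicit Arguments.
Theorem lemma2p1 (R : realType) (K : fieldExtType rat) (n : nat)
  (Hn : \dim {:K} = n)
  (tau : 'I_n -> {rmorphism K -> R})
  (tau_inj : forall i j : 'I_n, (forall a : K, tau i a = tau j a) -> i = j)
  (tau_all : forall f : {rmorphism K -> R}, exists i : 'I_n, forall a : K, f a = tau i a)
  (A : 'rV[R]_n -> Prop) (k : nat)
  (HA : integer_plane (Lambda tau) A)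
  (HID : integer_distance (Lambda tau) A k) (Hk : (0 < k)%N) :
  exists d : K, codifferent tau d /\
    forall x : 'rV[R]_n, A x -> \sum_(i < n) tau i d * x 0 i = k%:R.
Proof.
subst n.
have [[_ k0] | [nA0 idx]] := HID; first by rewrite k0 in Hk.
have [B LB] := Lambda_lattice_basis tau_inj.
have [c c_int Ac] := integer_plane_dual LB HA nA0 idx.
have [d d_codiff d_c] := dual_lattice_codifferent tau_inj c_int.
exists d; split=> // x Ax; rewrite -(Ac x Ax) -d_c mxE.
by apply: eq_bigr => i _; rewrite !mxE mulrC.
Qed.
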